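(* Let $\boldsymbol{H}\in\mathbb{F}_q^{r\times m}$, $k\in\{2,\dots,r\}$, $i\in L\subseteq[m]$, and regard all entries of $\boldsymbol{H}_{[k]}^{L}$ as fixed except $h_{k,i}$. Assume $L\setminus\{i\}$ is a basis set of $\boldsymbol{H}_{[k-1]}$ and $L$ is a dependent set of $\boldsymbol{H}_{[k-1]}$. Then $|Z_{k,i}^{L}|=1$, and if $h_{k,i}\in\mathbb{F}_q\setminus Z_{k,i}^{L}$, then $L$ is a basis set of $\boldsymbol{H}_{[k]}$.
   Context: $\boldsymbol{H}_{[k]}$ denotes the first $k$ rows and $\boldsymbol{H}_{[k]}^{L}$ its columns in $L$. For a matrix with columns indexed by $[m]$: $S\subseteq[m]$ is independent if its columns are linearly independent, dependent otherwise; a basis set is a maximal independent set (an independent $S$ with $|S|$ equal to the rank of the matrix); a circuit is a dependent set all of whose proper subsets are independent. Veto set: for a circuit $C$ of $\boldsymbol{H}_{[k-1]}$ with $i\in C\subseteq L$, the column of $\boldsymbol{H}_{[k-1]}$ indexed by $i$ equals a unique combination $\sum_{j\in C\setminus\{i\}} f_j\cdot(\text{column }j)$, and its veto value is $c(C)=\sum_{j\in C\setminus\{i\}}f_j h_{k,j}$ (the unique value of $h_{k,i}$ making the columns $C$ of $\boldsymbol{H}_{[k]}$ dependent). $Z_{k,i}^{L}=\{c(L'\cup\{i\}): L'\subseteq L\setminus\{i\},\ L'\cup\{i\}\text{ a circuit of }\boldsymbol{H}_{[k-1]}\}$. *)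

From HB Require Import structures.
From mathcomp Require Import all_boot all_order all_algebra all_field.
Set Implicit Arguments. Unset Strict Implicit. Unset Printing Implicit Defensive.
Import GRing.Theory.
Local Open Scope ring_scope.

Section Defs.
Variable F : finFieldType.

Definition topRows (r m n : nat) (H : 'M[F]_(r, m)) (hn : (n <= r)%N) : 'M[F]_(n, m) :=
  \matrix_(a < n, j < m) H (widen_ord hn a) j.

Definition independent (n m : nat) (A : 'M[F]_(n, m)) (S : {set 'I_m}) : bool :=
  [forall f : {ffun 'I_m -> F},
     ([forall j, (j \notin S) ==> (f j == 0)] && (\sum_j f j *: col j A == 0))
       ==> [forall j, f j == 0]].

Definition basis_set (n m : nat) (A : 'M[F]_(n, m)) (S : {set 'I_m}) : bool :=
  independent A S && (#|S| == \rank A).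

Definition circuit (n m : nat) (A : 'M[F]_(n, m)) (C : {set 'I_m}) : bool :=
  ~~ independent A C && [forall D : {set 'I_m}, (D \proper C) ==> independent A D].

(* Z^L_{k,i}: A = H_[k-1], h = k-th row of H.  c(C) for the circuit C = L' U {i}
   is sum_{j in C\{i}} f_j h_j where column i of A = sum_{j in C\{i}} f_j col_j. *)
Definition vetoSet (n m : nat) (A : 'M[F]_(n, m)) (h : 'I_m -> F)
    (i : 'I_m) (L : {set 'I_m}) : {set F} :=
  [set c : F | [exists L' : {set 'I_m},
     [&& L' \subset L :\ i, circuit A (i |: L') &
       [exists f : {ffun 'I_m -> F},
          [&& [forall j, (j \notin L') ==> (f j == 0)],
              col i A == \sum_j f j *: col j A &
              c == \sum_j f j * h j]]]]].

End Defs.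

From mathcomp Require Import all_boot all_order all_algebra all_field.
Set Implicit Arguments. Unset Strict Implicit. Unset Printing Implicit Defensive.
Import GRing.Theory.
Local Open Scope ring_scope.

(* Since L :\ i is independent and L is not, column i of A := H_[k-1] is a
   combination A f of the columns in L :\ i, with f unique.  Every dependency
   of A supported on L is then a multiple of the fundamental dependency
   e := delta_i - f, so the only circuit through i inside L is i together with
   the support of f, and Z = {sum_j f_j h_{k,j}}.  Evaluating the new row on
   u i *: e gives u i * (h_{k,i} - sum_j f_j h_{k,j}); so if h_{k,i} avoids Z,
   L is independent in H_[k].  A new row raises the rank by at most one, hence
   rank H_[k] = |L|. *)

Section ColumnIndependence.
Variables (F : finFieldType) (n m : nat) (A : 'M[F]_(n, m)).

Definition supported (S : {set 'I_m}) (u : 'cV[F]_m) := forall j, j \notin S -> u j 0 = 0.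

Lemma mulmx_sum_col (g : 'I_m -> F) : A *m \col_j g j = \sum_j g j *: col j A.
Proof.
by apply/matrixP => a b; rewrite summxE !mxE; apply: eq_bigr => j _; rewrite !mxE mulrC.
Qed.

Lemma independentP S :
  reflect (forall u, supported S u -> A *m u = 0 -> u = 0) (independent A S).
Proof.
apply: (iffP forallP) => [indS u uS Au0 | indS g].
  have /forallP u0 : [forall j, [ffun j => u j 0] j == 0].
    apply: (implyP (indS _)); apply/andP; split.
      by apply/forallP => j; apply/implyP; rewrite ffunE => /uS ->.
    rewrite (eq_bigr (fun j => u j 0 *: col j A)) => [|j _]; last by rewrite ffunE.
    rewrite -mulmx_sum_col -Au0; apply/eqP; congr (_ *m _).
    by apply/matrixP => j b; rewrite ord1 mxE.
  by apply/matrixP => j b; rewrite ord1 mxE; apply/eqP; move: (u0 j); rewrite ffunE.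
apply/implyP => /andP [/forallP gS /eqP g0]; apply/forallP => j.
suff /matrixP /(_ j 0) : \col_j g j = 0 by rewrite !mxE => ->.
apply: indS; last by rewrite mulmx_sum_col.
by move=> j' /(implyP (gS j')) /eqP; rewrite mxE.
Qed.

Lemma dependentP S :
  reflect (exists u, [/\ supported S u, A *m u = 0 & u != 0]) (~~ independent A S).
Proof.
apply: (iffP idP) => [|[u [uS Au0 u0]]]; last first.
  by apply/independentP => /(_ u uS Au0); apply/eqP.
move/forallPn => [g]; rewrite negb_imply => /andP [/andP [/forallP gS /eqP g0]].
move=> /forallPn [j gj]; exists (\col_j g j); split.
- by move=> j' /(implyP (gS j')) /eqP; rewrite mxE.
- by rewrite mulmx_sum_col.
- by apply: contraNneq gj => /matrixP /(_ j 0); rewrite !mxE => ->.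
Qed.

Lemma independent_mul_inj S u1 u2 : independent A S ->
  supported S u1 -> supported S u2 -> A *m u1 = A *m u2 -> u1 = u2.
Proof.
move=> /independentP indS u1S u2S Au12; apply/eqP; rewrite -subr_eq0; apply/eqP.
by apply: indS => [j jS|]; rewrite ?mxE ?u1S ?u2S ?subr0 // mulmxBr Au12 subrr.
Qed.

Lemma independent_card_le_rank S : independent A S -> (#|S| <= \rank A)%N.
Proof.
move=> /independentP indS; pose f : 'I_#|S| -> 'I_m := enum_val.
have <- : \rank (colsub f A) = #|S|.
  apply/eqP; rewrite -mxrank_tr; apply/inj_row_free => v /(congr1 trmx).
  rewrite trmx_mul trmxK trmx0 -[A in colsub _ A]mulmx1 -mulmx_colsub -mulmxA => /indS.
  set u := _ *m v^T.
  have uE j : u j 0 = \sum_a (j == f a)%:R * v 0 a.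
    by rewrite !mxE; apply: eq_bigr => a _; rewrite !mxE.
  have uS : supported S u.
    move=> j jS; rewrite uE big1 // => a _.
    by case: eqP jS => [->|]; rewrite ?enum_valP ?mul0r.
  move=> /(_ uS) u0; apply/rowP => a; rewrite mxE.
  have := uE (f a); rewrite u0 mxE (bigD1 a) //= eqxx mul1r big1 ?addr0 // => b ba.
  by rewrite (inj_eq enum_val_inj) eq_sym (negbTE ba) mul0r.
by rewrite -[A in colsub _ A]mulmx1 -mulmx_colsub mxrankM_maxl.
Qed.

Lemma dependent_col_comb (S : {set 'I_m}) i :
    i \in S -> independent A (S :\ i) -> ~~ independent A S ->
  exists2 f, supported (S :\ i) f & col i A = A *m f.
Proof.
move=> iS /independentP indSi /dependentP [u [uS Au0 u0]].
have ui0 : u i 0 != 0.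
  apply: contra u0 => /eqP ui0; apply/eqP/indSi => // j.
  by rewrite in_setD1 negb_and negbK => /orP [/eqP -> | /uS].
exists (delta_mx i 0 - (u i 0)^-1 *: u).
  move=> j; rewrite in_setD1 negb_and negbK !mxE => /orP [/eqP -> | jS].
    by rewrite !eqxx mulVf ?subrr.
  have /negbTE -> : j != i by apply: contraNneq jS => ->.
  by rewrite (uS j jS) mulr0 subrr.
by rewrite mulmxBr -colE -scalemxAr Au0 scaler0 subr0.
Qed.

End ColumnIndependence.

Section FundamentalCircuit.
Variables (F : finFieldType) (n m : nat) (A : 'M[F]_(n, m)).
Variables (L : {set 'I_m}) (i : 'I_m) (f : 'cV[F]_m).
Hypotheses (indLi : independent A (L :\ i)) (fS : supported (L :\ i) f).
Hypothesis colAi : col i A = A *m f.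

Let e : 'cV[F]_m := delta_mx i 0 - f.

Lemma mul_fundamental_eq0 : A *m e = 0.
Proof. by rewrite mulmxBr -colE colAi subrr. Qed.

Lemma fundamental_support {x} : x \in i |: [set j | f j 0 != 0] -> e x 0 != 0.
Proof.
have fi0 : f i 0 = 0 by rewrite fS // setD11.
rewrite !inE !mxE => /orP [/eqP -> | fx]; first by rewrite !eqxx fi0 subr0 oner_eq0.
have /negbTE -> : x != i by apply: contraNneq fx => ->; rewrite fi0.
by rewrite sub0r oppr_eq0.
Qed.

Lemma dependency_scale_fundamental u : supported L u -> A *m u = 0 -> u = u i 0 *: e.
Proof.
move=> uL Au0; apply/eqP; rewrite -subr_eq0; apply/eqP.
apply: (independentP _ _ indLi); last first.
  by rewrite mulmxBr -scalemxAr mul_fundamental_eq0 scaler0 Au0 subr0.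
move=> j; rewrite in_setD1 negb_and negbK !mxE.
case: (eqVneq j i) => [-> _ | ji /= jL]; first by rewrite fS ?setD11 // subr0 mulr1 subrr.
by rewrite uL // fS ?in_setD1 ?negb_and ?jL ?orbT // subrr mulr0 subr0.
Qed.

Hypothesis iL : i \in L.

Lemma fundamental_circuit : circuit A (i |: [set j | f j 0 != 0]).
Proof.
set C := _ |: _.
have CL : C \subset L.
  rewrite subUset sub1set iL; apply/subsetP => j; rewrite inE => fj.
  by apply: contraR fj => jL; rewrite fS ?negbK // in_setD1 negb_and jL orbT.
apply/andP; split.
  apply/dependentP; exists e; split; last 1 first.
  - by apply: contraTneq _ (fundamental_support (setU11 i _)) => ->; rewrite mxE eqxx.
  - move=> j; rewrite !inE negb_or negbK => /andP [/negbTE ji /eqP fj].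
    by rewrite !mxE ji fj subr0.
  - exact: mul_fundamental_eq0.
apply/forallP => D; apply/implyP => /properP [DC [x xC xD]].
apply/independentP => u uD Au0.
have uL : supported L u.
  by move=> j jL; apply: uD; apply: contra jL => /(subsetP DC) /(subsetP CL).
have := uD x xD; rewrite {1}(dependency_scale_fundamental uL Au0) mxE => /eqP.
rewrite mulf_eq0 (negbTE (fundamental_support xC)) orbF => /eqP ui0.
by rewrite (dependency_scale_fundamental uL Au0) ui0 scale0r.
Qed.

Lemma vetoSetE (h : 'I_m -> F) : vetoSet A h i L = [set \sum_j f j 0 * h j].
Proof.
apply/setP => c; rewrite inE in_set1; apply/existsP/eqP.
  case=> L' /and3P [L'Li _ /existsP [g /and3P [/forallP gL' /eqP colAg /eqP ->]]].
  have gf : \col_j g j = f.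
    apply: (independent_mul_inj indLi) => //; last first.
      by rewrite -colAi colAg -mulmx_sum_col.
    move=> j jLi; rewrite mxE; apply/eqP/(implyP (gL' j)).
    by apply: contra jLi; apply: (subsetP L'Li).
  by apply: eq_bigr => j _; rewrite -gf mxE.
move=> ->; exists [set j | f j 0 != 0]; rewrite fundamental_circuit /=.
apply/andP; split.
  by apply/subsetP => j; rewrite inE; apply: contraR => /fS ->; rewrite eqxx.
apply/existsP; exists [ffun j => f j 0]; apply/and3P; split.
- by apply/forallP => j; apply/implyP; rewrite inE negbK ffunE.
- apply/eqP; rewrite -mulmx_sum_col colAi; congr (_ *m _).
  by apply/matrixP => j b; rewrite ord1 !mxE ffunE.
- by apply/eqP; apply: eq_bigr => j _; rewrite ffunE.
Qed.

End FundamentalCircuit.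

Section TopRows.
Variables (F : finFieldType) (r m : nat) (H : 'M[F]_(r, m)).

Lemma topRowsE n (hn : (n <= r)%N) : topRows H hn = rowsub (widen_ord hn) H.
Proof. by apply/matrixP => a j; rewrite !mxE. Qed.

Lemma mul_topRows_eq0 n (hn : (n <= r)%N) (u : 'cV_m) :
  (topRows H hn *m u == 0) = [forall a : 'I_r, (a < n)%N ==> ((H *m u) a 0 == 0)].
Proof.
rewrite topRowsE mul_rowsub_mx; apply/eqP/forallP => [Hu0 a | Hu0].
  apply/implyP => an; have /matrixP /(_ (Ordinal an) 0) := Hu0.
  rewrite !mxE (_ : widen_ord hn (Ordinal an) = a) => [/eqP //|]; exact: val_inj.
apply/matrixP => a b; rewrite ord1 mxE [RHS]mxE.
by apply/eqP/(implyP (Hu0 _)); rewrite /= ltn_ord.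
Qed.

Lemma mxrank_topRows_succ (k : 'I_r) :
  (\rank (topRows H (ltn_ord k)) <= (\rank (topRows H (ltnW (ltn_ord k)))).+1)%N.
Proof.
set A := topRows H (ltnW _).
have subA : (topRows H (ltn_ord k) <= A + row k H)%MS.
  apply/row_subP => a; rewrite topRowsE row_rowsub.
  have [ak | ka] := ltnP a k.
    rewrite (_ : widen_ord _ a = widen_ord (ltnW (ltn_ord k)) (Ordinal ak)) //.
      by rewrite -row_rowsub -topRowsE (submx_trans (row_sub _ _) (addsmxSl _ _)).
    exact: val_inj.
  rewrite (_ : widen_ord _ a = k) ?addsmxSr //.
  by apply: val_inj; apply/eqP; rewrite /= eqn_leq ka -ltnS ltn_ord.
apply: leq_trans (mxrankS subA) (leq_trans (mxrank_adds_leqif _ _) _).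
by rewrite -(addn1 (\rank A)) leq_add2l rank_leq_row.
Qed.

Lemma independent_add_row (L : {set 'I_m}) i f (k : 'I_r) :
    independent (topRows H (ltnW (ltn_ord k))) (L :\ i) -> supported (L :\ i) f ->
    col i (topRows H (ltnW (ltn_ord k))) = topRows H (ltnW (ltn_ord k)) *m f ->
    H k i != \sum_j f j 0 * H k j ->
  independent (topRows H (ltn_ord k)) L.
Proof.
move=> indLi fS colAi hki; apply/independentP => u uL /eqP.
rewrite mul_topRows_eq0 => /forallP Hu0.
have Au0 : topRows H (ltnW (ltn_ord k)) *m u = 0.
  apply/eqP; rewrite mul_topRows_eq0; apply/forallP => a.
  by apply/implyP => /ltnW /(implyP (Hu0 a)).
have := implyP (Hu0 k) (ltnSn k).
rewrite (dependency_scale_fundamental indLi fS colAi uL Au0) -scalemxAr mulmxBr -colE !mxE.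
rewrite mulf_eq0 subr_eq0 (eq_bigr (fun j => f j 0 * H k j)) => [|j _]; last first.
  by rewrite mulrC.
by rewrite (negbTE hki) orbF => /eqP ->; rewrite scale0r.
Qed.

End TopRows.

(* [k] is 0-based: [topRows H (ltnW (ltn_ord k))] is the paper's H_[k-1] and
   [H k] its k-th row. *)
Theorem proposition4 (F : finFieldType) (r m : nat) (H : 'M[F]_(r, m))
    (k : 'I_r) (i : 'I_m) (L : {set 'I_m}) :
  (1 <= k)%N -> i \in L ->
  basis_set (topRows H (ltnW (ltn_ord k))) (L :\ i) ->
  ~~ independent (topRows H (ltnW (ltn_ord k))) L ->
  #|vetoSet (topRows H (ltnW (ltn_ord k))) (fun j => H k j) i L| = 1%N /\
  (H k i \notin vetoSet (topRows H (ltnW (ltn_ord k))) (fun j => H k j) i L ->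
   basis_set (topRows H (ltn_ord k)) L).
Proof.
move=> _ iL /andP [indLi /eqP rankA] depL.
have [f fS colAi] := dependent_col_comb iL indLi depL.
rewrite (vetoSetE indLi fS colAi iL) cards1 in_set1; split=> // hki.
have indL := independent_add_row indLi fS colAi hki.
rewrite /basis_set indL eqn_leq independent_card_le_rank //=.
by rewrite (cardsD1 i L) iL add1n rankA mxrank_topRows_succ.
Qed.
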